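(* Let $(X_1,d_1)$, $(X_2,d_2)$ be proper CAT(0) spaces, let $\Gamma$ be an infinite group acting convex co-compactly by isometries on $X_1$ and on $X_2$ via homomorphisms $\rho_i:\Gamma\to\mathrm{Isom}(X_i)$, and suppose the diagonal action $\rho=(\rho_1,\rho_2)$ of $\Gamma$ on $X_1\times X_2$ is convex co-compact. Let $\alpha\in\Gamma$ be such that $\rho_i(\alpha)$ is a rank one isometry of $X_i$ for $i=1,2$. Let $\beta\in\Gamma$ be an infinite order element such that, for $i=1,2$, $\rho_i(\beta)$ fixes the attractive and the repulsive fixed points of $\rho_i(\alpha)$ in the visual boundary $\partial X_i$. Then $\mathrm{slp}(\rho(\beta))=\mathrm{slp}(\rho(\alpha))$.
   Context: $X_1\times X_2$ carries the product metric $\sqrt{d_1^2+d_2^2}$. Convex co-compact: properly discontinuous isometric action with a nonempty closed invariant convex subset having compact quotient. A hyperbolic isometry $g$ (displacement $d(x,gx)$ attains its infimum $\ell(g)>0$) has an axis, a $g$-invariant geodesic line where the displacement is minimal; $g$ is rank one if an axis $l_g$ has the contraction property (some $K>0$ bounds the diameter of the nearest-point projection to $l_g$ of any ball disjoint from $l_g$). A rank one isometry $g$ has two fixed points $g_\pm\in\partial X$ (the endpoints of its axis) with $g^n\to g_+$ uniformly on compact subsets of $\partial X\setminus\{g_-\}$ as $n\to\infty$; $g_+$ is attractive and $g_-$ repulsive. Slope: for a geodesic ray $r$ in $X_1\times X_2$ with projections $r_i$, $\mathrm{slp}(r)=\infty$ if $r_2$ is constant, otherwise $d_1(r_1(0),r_1(1))/d_2(r_2(0),r_2(1))$;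 for a line $l$, $\mathrm{slp}(l)=\mathrm{slp}(l|_{[0,\infty)})$; for a hyperbolic isometry $g$ of $X_1\times X_2$, $\mathrm{slp}(g)$ is the slope of any of its axes. *)

From Stdlib Require Import Reals List ClassicalEpsilon.
Open Scope R_scope.
Set Implicit Arguments.

Record Group := {
  gcar :> Type;
  gmul : gcar -> gcar -> gcar;
  gone : gcar;
  ginv : gcar -> gcar;
  gmulA : forall a b c, gmul a (gmul b c) = gmul (gmul a b) c;
  gmul1 : forall a, gmul gone a = a;
  gmulV : forall a, gmul (ginv a) a = gone
}.

Fixpoint gpow (G : Group) (g : G) (n : nat) : G :=
  match n with O => gone G | S m => gmul G g (@gpow G g m) end.

Definition infinite_group (G : Group) : Prop :=
  forall l : list G, exists g : G, ~ In g l.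

Definition infinite_order {G : Group} (g : G) : Prop :=
  forall n : nat, (0 < n)%nat -> @gpow G g n <> gone G.

Definition finite_set {T : Type} (P : T -> Prop) : Prop :=
  exists l : list T, forall x, P x -> In x l.

Section Metric.
Variables (T : Type) (d : T -> T -> R).

Definition is_metric : Prop :=
  (forall x y, 0 <= d x y) /\ (forall x y, d x y = 0 <-> x = y) /\
  (forall x y, d x y = d y x) /\ (forall x y z, d x z <= d x y + d y z).

Definition geod_segment (c : R -> T) (x y : T) : Prop :=
  c 0 = x /\ c 1 = y /\
  forall s t, 0 <= s <= 1 -> 0 <= t <= 1 -> d (c s) (c t) = Rabs (s - t) * d x y.

(** CAT(0): geodesic metric space where every geodesic triangle satisfies the
    CAT(0) comparison inequality (points on two sides [x,y], [x,z], compared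
    with the Euclidean comparison triangle). *)
Definition CAT0 : Prop :=
  is_metric /\ (forall x y, exists c, geod_segment c x y) /\
  forall x y z c1 c2, geod_segment c1 x y -> geod_segment c2 x z ->
  forall s t, 0 <= s <= 1 -> 0 <= t <= 1 ->
    (d (c1 s) (c2 t)) ^ 2 <=
      s ^ 2 * (d x y) ^ 2 + t ^ 2 * (d x z) ^ 2
      - s * t * ((d x y) ^ 2 + (d x z) ^ 2 - (d y z) ^ 2).

Definition converges (u : nat -> T) (x : T) : Prop :=
  forall eps, 0 < eps -> exists N, forall n, (N <= n)%nat -> d (u n) x < eps.

Definition compact (K : T -> Prop) : Prop :=
  forall u : nat -> T, (forall n, K (u n)) ->
  exists (phi : nat -> nat) (x : T),
    (forall n m, (n < m)%nat -> (phi n < phi m)%nat) /\ K x /\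
    converges (fun n => u (phi n)) x.

Definition proper_space : Prop :=
  forall x r, compact (fun y => d x y <= r).

Definition closed_set (C : T -> Prop) : Prop :=
  forall u x, (forall n, C (u n)) -> converges u x -> C x.

Definition convex_set (C : T -> Prop) : Prop :=
  forall x y c, C x -> C y -> geod_segment c x y ->
  forall t, 0 <= t <= 1 -> C (c t).

Definition isometric_action {G : Group} (act : G -> T -> T) : Prop :=
  (forall x, act (gone G) x = x) /\
  (forall g h x, act (gmul G g h) x = act g (act h x)) /\
  (forall g x y, d (act g x) (act g y) = d x y).

Definition properly_discontinuous {G : Group} (act : G -> T -> T) : Prop :=
  forall K, compact K -> finite_set (fun g : G => exists x, K x /\ K (act g x)).

(** compact quotient C/Gamma: a compact subset K of C whose translates cover C *)
Definition convex_cocompact {G : Group} (act : G -> T -> T) : Prop :=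
  isometric_action act /\ properly_discontinuous act /\
  exists C : T -> Prop,
    (exists x, C x) /\ closed_set C /\ convex_set C /\
    (forall g x, C x -> C (act g x)) /\
    exists K, compact K /\ (forall x, K x -> C x) /\
      forall x, C x -> exists g y, K y /\ x = act g y.

Definition geod_line (l : R -> T) : Prop :=
  forall s t, d (l s) (l t) = Rabs (s - t).

Definition hyperbolic (f : T -> T) : Prop :=
  exists x0, 0 < d x0 (f x0) /\ forall x, d x0 (f x0) <= d x (f x).

Definition is_axis (f : T -> T) (l : R -> T) : Prop :=
  geod_line l /\ (forall t, exists s, f (l t) = l s) /\
  forall t x, d (l t) (f (l t)) <= d x (f x).

Definition is_proj (l : R -> T) (y : T) (t : R) : Prop :=
  forall s, d y (l t) <= d y (l s).

Definition contracting (l : R -> T) : Prop :=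
  exists K, 0 < K /\
  forall x r, (forall t, r <= d x (l t)) ->
  forall y1 y2 t1 t2, d x y1 < r -> d x y2 < r ->
    is_proj l y1 t1 -> is_proj l y2 t2 -> d (l t1) (l t2) <= K.

Definition rank_one (f : T -> T) : Prop :=
  hyperbolic f /\ exists l, is_axis f l /\ contracting l.

(** Rays r, r' : [0,oo) -> T define the same boundary point *)
Definition asymptotic (r r' : R -> T) : Prop :=
  exists C, forall t, 0 <= t -> d (r t) (r' t) <= C.

Definition fixes_axis_endpoints (f h : T -> T) : Prop :=
  exists l, is_axis f l /\
    asymptotic (fun t => h (l t)) l /\
    asymptotic (fun t => h (l (- t))) (fun t => l (- t)).
End Metric.

Definition dprod {X1 X2 : Type} (d1 : X1 -> X1 -> R) (d2 : X2 -> X2 -> R)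
  (p q : X1 * X2) : R :=
  sqrt ((d1 (fst p) (fst q)) ^ 2 + (d2 (snd p) (snd q)) ^ 2).

Definition diag_act {G : Group} {X1 X2 : Type} (a1 : G -> X1 -> X1)
  (a2 : G -> X2 -> X2) (g : G) (p : X1 * X2) : X1 * X2 :=
  (a1 g (fst p), a2 g (snd p)).

(** Slope of a line in X1 x X2; None stands for +infinity *)
Definition slp {X1 X2 : Type} (d1 : X1 -> X1 -> R) (d2 : X2 -> X2 -> R)
  (l : R -> X1 * X2) : option R :=
  match excluded_middle_informative
          (forall t, 0 <= t -> snd (l t) = snd (l 0)) with
  | left _ => None
  | right _ => Some (d1 (fst (l 0)) (fst (l 1)) / d2 (snd (l 0)) (snd (l 1)))
  end.

From Pilot Require Import Defs.
From Stdlib Require Import Reals Lra Lia Psatz ZArith List Classical ClassicalEpsilon.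
Open Scope R_scope.

(* Since [rho1 beta] fixes the endpoints of a contracting axis [l] of [rho1 alpha],
   each [rho1 beta^n] moves [l] to a line at bounded distance from [l].  By the
   contraction property such a line comes uniformly close to [l], so proper
   discontinuity yields [alpha^zi beta^i = alpha^zj beta^j] with [i < j].  Hence
   [beta^N], [N = j - i], translates every axis of [rho alpha] in [X1 x X2], as well
   as every axis of [rho beta]; the latter exist because infinite-order elements of
   convex cocompact actions on proper CAT(0) spaces are semisimple.  The two axes thus
   stay at bounded distance along two arithmetic progressions.  As the factor
   components of a geodesic line of the l2-product have constant speeds, comparing
   their linear growth forces equal component speeds, that is, equal slopes. *)

Lemma nonpos_of_nat_mul_bounded (a C : R) :
  (forall k : nat, INR k * a <= C) -> a <= 0.
Proof.
  intros H; destruct (Rle_lt_dec a 0) as [|Ha]; auto.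
  destruct (INR_archimed a C Ha) as [n Hn]; specialize (H n); lra.
Qed.

Lemma eq_of_nat_mul_dist_bounded (x y E : R) :
  (forall k : nat, Rabs (INR k * x - INR k * y) <= E) -> x = y.
Proof.
  intros H.
  assert (x - y <= 0 /\ y - x <= 0) as [? ?]; [|lra].
  split; apply (nonpos_of_nat_mul_bounded _ E); intro k; specialize (H k);
    unfold Rabs in H; destruct Rcase_abs in H; lra.
Qed.

Lemma exists_Z_mult_near (s tau : R) :
  tau <> 0 -> exists z : Z, Rabs (s - IZR z * tau) <= Rabs tau.
Proof.
  intros Htau; destruct (archimed (s / tau)) as [H1 H2].
  exists (up (s / tau) - 1)%Z.
  replace (s - IZR (up (s / tau) - 1) * tau)
    with ((s / tau - IZR (up (s / tau) - 1)) * tau) by (field; auto).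
  rewrite Rabs_mult, minus_IZR, (Rabs_right (_ - _)) by (simpl; lra).
  pose proof (Rabs_pos tau); simpl; nra.
Qed.

Lemma INR_le_pow2 k : INR k <= 2 ^ k.
Proof.
  induction k as [|k IH]; [simpl; lra|].
  rewrite S_INR; simpl pow; pose proof (pow_R1_Rle 2 k ltac:(lra)); lra.
Qed.

Lemma inf_of_nonneg_exists {A : Type} (f : A -> R) (a : A) :
  (forall x, 0 <= f x) ->
  exists m, (forall x, m <= f x) /\ forall eps, 0 < eps -> exists x, f x < m + eps.
Proof.
  intros Hf; set (E := fun r => exists x, r = - f x).
  destruct (completeness E) as [L [HL1 HL2]].
  - exists 0; intros r [x ->]; pose proof (Hf x); lra.
  - exists (- f a), a; reflexivity.
  - exists (- L); split.
    + intro x; assert (Hx : E (- f x)) by (exists x; reflexivity).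
      specialize (HL1 _ Hx); lra.
    + intros eps Heps; apply NNPP; intro Hno.
      assert (L <= L - eps); [|lra].
      apply HL2; intros r [x ->]; apply Rnot_lt_le; intro; apply Hno; exists x; lra.
Qed.

Definition convex_on_R (f : R -> R) : Prop :=
  forall p q lam, 0 <= lam <= 1 ->
  f ((1 - lam) * p + lam * q) <= (1 - lam) * f p + lam * f q.

(* A nonconstant convex function grows at least linearly in some direction. *)
Lemma bounded_convex_const (f : R -> R) (M : R) :
  convex_on_R f -> (forall t, Rabs (f t) <= M) -> forall a b, f a = f b.
Proof.
  intros Hf HM.
  assert (Hlt : forall a b, f a < f b -> False).
  { intros a b Hab.
    set (mu := Rmax 1 ((2 * M + 1) / (f b - f a))).
    assert (Hmu1 : 1 <= mu) by apply Rmax_l.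
    assert (Hmu2 : 2 * M + 1 <= mu * (f b - f a)).
    { apply (Rmult_le_reg_r (/ (f b - f a))); [apply Rinv_0_lt_compat; lra|].
      rewrite Rmult_assoc, Rinv_r, Rmult_1_r by lra; apply Rmax_r. }
    set (x := a + mu * (b - a)).
    assert (Hx : f b <= (1 - / mu) * f a + / mu * f x).
    { replace b with ((1 - / mu) * a + / mu * x) at 1 by (unfold x; field; lra).
      apply Hf; split; [apply Rlt_le, Rinv_0_lt_compat; lra|].
      rewrite <- Rinv_1; apply Rinv_le_contravar; lra. }
    assert (mu * (f b - f a) <= f x - f a).
    { replace (f x - f a) with (mu * (/ mu * (f x - f a))) by (field; lra).
      apply Rmult_le_compat_l; lra. }
    pose proof (HM x); pose proof (HM a).
    unfold Rabs in *; do 2 destruct Rcase_abs; lra. }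
  intros a b; destruct (Rtotal_order (f a) (f b)) as [h|[h|h]]; auto;
    exfalso; eauto.
Qed.

Lemma minkowski_eq_case a a' b b' D1 D2 p q :
  0 <= a -> 0 <= a' -> 0 <= b -> 0 <= b' -> 0 <= D1 -> 0 <= D2 -> 0 <= p -> 0 <= q ->
  a ^ 2 + a' ^ 2 = p ^ 2 -> b ^ 2 + b' ^ 2 = q ^ 2 -> D1 ^ 2 + D2 ^ 2 = (p + q) ^ 2 ->
  D1 <= a + b -> D2 <= a' + b' -> D1 = a + b /\ a * q = b * p.
Proof.
  intros Ha Ha' Hb Hb' HD1 HD2 Hp Hq Hpa Hqb HD H1 H2.
  set (S := a * b + a' * b').
  assert (Lagrange : p ^ 2 * q ^ 2 - S ^ 2 = (a * b' - a' * b) ^ 2)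
    by (rewrite <- Hpa, <- Hqb; unfold S; ring).
  assert (Hsum : (a + b) ^ 2 + (a' + b') ^ 2 = p ^ 2 + q ^ 2 + 2 * S)
    by (rewrite <- Hpa, <- Hqb; unfold S; ring).
  assert (HS : S = p * q).
  { assert (p * q <= S).
    { assert (D1 ^ 2 <= (a + b) ^ 2) by nra.
      assert (D2 ^ 2 <= (a' + b') ^ 2) by nra.
      lra. }
    assert (0 <= S) by (unfold S; nra).
    assert (S ^ 2 <= (p * q) ^ 2).
    { pose proof (pow2_ge_0 (a * b' - a' * b)).
      replace ((p * q) ^ 2) with (p ^ 2 * q ^ 2) by ring; lra. }
    assert (0 <= p * q) by nra.
    apply Rle_antisym; nra. }
  assert (Hcross : a * b' = a' * b).
  { assert ((a * b' - a' * b) ^ 2 = 0) by (rewrite <- Lagrange, HS; ring).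
    apply Rminus_diag_uniq; destruct (Req_dec (a * b' - a' * b) 0) as [|Hne]; auto.
    now apply (pow_nonzero _ 2) in Hne. }
  split.
  - assert (D1 ^ 2 = (a + b) ^ 2) by nra.
    apply Rle_antisym; nra.
  - assert ((a * q) ^ 2 = (b * p) ^ 2).
    { replace ((a * q) ^ 2) with (a ^ 2 * q ^ 2) by ring.
      replace ((b * p) ^ 2) with (b ^ 2 * p ^ 2) by ring.
      rewrite <- Hpa, <- Hqb.
      replace (a ^ 2 * (b ^ 2 + b' ^ 2)) with (a ^ 2 * b ^ 2 + (a * b') ^ 2) by ring.
      rewrite Hcross; ring. }
    assert (0 <= a * q /\ 0 <= b * p) as [] by (split; nra).
    apply Rle_antisym; nra.
Qed.

Lemma linear_of_proportional_split (F : R -> R -> R) :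
  (forall a u b, a < u < b ->
     F a u * (b - a) = F a b * (u - a) /\ F u b * (b - a) = F a b * (b - u)) ->
  forall a b, a < b -> F a b = F 0 1 * (b - a).
Proof.
  intros HF a b Hab.
  set (S := Rmin a 0 - 1); set (U := Rmax b 1 + 1).
  assert (S < a /\ S < 0) as [] by (unfold S; pose proof (Rmin_l a 0); pose proof (Rmin_r a 0); lra).
  assert (b < U /\ 1 < U) as [] by (unfold U; pose proof (Rmax_l b 1); pose proof (Rmax_r b 1); lra).
  destruct (HF S a b) as [_ Q1]; [lra|].
  destruct (HF S b U) as [Q2 _]; [lra|].
  destruct (HF S 0 1) as [_ Q3]; [lra|].
  destruct (HF S 1 U) as [Q4 _]; [lra|].
  assert (E1 : F a b * (U - S) = F S U * (b - a)).
  { apply (Rmult_eq_reg_r (b - S)); [|lra].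
    replace (F a b * (U - S) * (b - S)) with (F a b * (b - S) * (U - S)) by ring.
    rewrite Q1.
    replace (F S b * (b - a) * (U - S)) with (F S b * (U - S) * (b - a)) by ring.
    rewrite Q2; ring. }
  assert (E2 : F 0 1 * (U - S) = F S U).
  { apply (Rmult_eq_reg_r (1 - S)); [|lra].
    replace (F 0 1 * (U - S) * (1 - S)) with (F 0 1 * (1 - S) * (U - S)) by ring.
    rewrite Q3, Rminus_0_r, Rmult_1_r, Q4; ring. }
  apply (Rmult_eq_reg_r (U - S)); [|lra].
  rewrite E1, <- E2; ring.
Qed.

Lemma constant_speed_of_pythagorean (F F' : R -> R -> R) :
  (forall a b, 0 <= F a b) -> (forall a b, 0 <= F' a b) ->
  (forall a u b, F a b <= F a u + F u b) -> (forall a u b, F' a b <= F' a u + F' u b) ->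
  (forall a b, F a b = F b a) ->
  (forall a b, F a b ^ 2 + F' a b ^ 2 = (a - b) ^ 2) ->
  forall s t, F s t = F 0 1 * Rabs (s - t).
Proof.
  intros F0 F'0 Ftri F'tri Fsym Fpyth.
  assert (Lin : forall a b, a < b -> F a b = F 0 1 * (b - a)).
  { apply linear_of_proportional_split; intros a u b Hu.
    destruct (minkowski_eq_case (F a u) (F' a u) (F u b) (F' u b) (F a b) (F' a b)
                (u - a) (b - u)) as [E1 E2]; auto; try lra;
      try (rewrite Fpyth; ring).
    split; rewrite E1; nra. }
  intros s t; destruct (Rtotal_order s t) as [h|[<-|h]].
  - rewrite Lin, Rabs_left by lra; ring.
  - assert (F s s = 0) by (pose proof (Fpyth s s); pose proof (F0 s s); pose proof (F'0 s s); nra).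
    rewrite Rminus_diag, Rabs_R0; lra.
  - rewrite Fsym, Lin, Rabs_right by lra; ring.
Qed.

Lemma sqrt_sum_sq_triangle a1 a2 b1 b2 c1 c2 :
  0 <= a1 -> 0 <= a2 -> 0 <= b1 -> 0 <= b2 -> 0 <= c1 -> 0 <= c2 ->
  c1 <= a1 + b1 -> c2 <= a2 + b2 ->
  sqrt (c1 ^ 2 + c2 ^ 2) <= sqrt (a1 ^ 2 + a2 ^ 2) + sqrt (b1 ^ 2 + b2 ^ 2).
Proof.
  intros.
  assert (HA : 0 <= a1 ^ 2 + a2 ^ 2) by nra; assert (HB : 0 <= b1 ^ 2 + b2 ^ 2) by nra.
  pose proof (sqrt_cauchy a1 a2 b1 b2) as Hcs; unfold Rsqr in Hcs.
  replace (a1 * a1 + a2 * a2) with (a1 ^ 2 + a2 ^ 2) in Hcs by ring.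
  replace (b1 * b1 + b2 * b2) with (b1 ^ 2 + b2 ^ 2) in Hcs by ring.
  rewrite <- (sqrt_pow2 (sqrt (a1 ^ 2 + a2 ^ 2) + sqrt (b1 ^ 2 + b2 ^ 2)))
    by (pose proof (sqrt_pos (a1 ^ 2 + a2 ^ 2)); pose proof (sqrt_pos (b1 ^ 2 + b2 ^ 2)); lra).
  apply sqrt_le_1_alt.
  replace ((sqrt (a1 ^ 2 + a2 ^ 2) + sqrt (b1 ^ 2 + b2 ^ 2)) ^ 2)
    with (sqrt (a1 ^ 2 + a2 ^ 2) ^ 2 + sqrt (b1 ^ 2 + b2 ^ 2) ^ 2
          + 2 * (sqrt (a1 ^ 2 + a2 ^ 2) * sqrt (b1 ^ 2 + b2 ^ 2))) by ring.
  rewrite !pow2_sqrt by auto; nra.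
Qed.

Lemma list_value_infinitely_often {A : Type} (L : list A) (f : nat -> A) (M : nat) :
  (forall n, (M <= n)%nat -> In (f n) L) ->
  exists a, forall N, exists n, (N <= n)%nat /\ f n = a.
Proof.
  revert M; induction L as [|a L IH]; intros M H.
  - destruct (H M (le_n M)).
  - destruct (classic (forall N, exists n, (N <= n)%nat /\ f n = a))
      as [Hinf|Hfin]; [now exists a|].
    apply not_all_ex_not in Hfin as [N0 HN0].
    apply (IH (Nat.max M N0)); intros n Hn.
    destruct (H n ltac:(lia)) as [Ha|HL]; [|exact HL].
    exfalso; apply HN0; exists n; split; [lia|auto].
Qed.

Lemma list_value_repeats {A : Type} (L : list A) (f : nat -> A) :
  (forall n, In (f n) L) -> exists i j, (i < j)%nat /\ f i = f j.
Proof.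
  intros H; destruct (list_value_infinitely_often L f 0 (fun n _ => H n)) as [a Ha].
  destruct (Ha 0%nat) as [i [_ Hi]]; destruct (Ha (S i)) as [j [Hj Hj']].
  exists i, j; split; [lia|congruence].
Qed.

Lemma strict_mono_ge (phi : nat -> nat) :
  (forall n m, (n < m)%nat -> (phi n < phi m)%nat) -> forall n, (n <= phi n)%nat.
Proof.
  intros H n; induction n; [lia|]; specialize (H n (S n) ltac:(lia)); lia.
Qed.

Section GroupLaws.
Context {G : Group}.

Lemma gmulV_r (a : G) : gmul G a (ginv G a) = gone G.
Proof.
  rewrite <- (gmul1 G (gmul G a (ginv G a))), <- (gmulV G (ginv G a)) at 1.
  rewrite <- gmulA, (gmulA G (ginv G a)), gmulV, gmul1; apply gmulV.
Qed.

Lemma gmul1_r (a : G) : gmul G a (gone G) = a.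
Proof. rewrite <- (gmulV G a), gmulA, gmulV_r; apply gmul1. Qed.

Lemma gpow_add (a : G) n m : gpow G a (n + m) = gmul G (gpow G a n) (gpow G a m).
Proof.
  induction n as [|n IH]; simpl; [now rewrite gmul1|]; now rewrite IH, gmulA.
Qed.

Lemma not_infinite_order_of_gpow_eq (a : G) i j :
  (i < j)%nat -> gpow G a i = gpow G a j -> ~ infinite_order a.
Proof.
  intros Hij E Hinf; apply (Hinf (j - i)%nat); [lia|].
  assert (Hshift : gmul G (gpow G a (j - i)) (gpow G a i) = gpow G a i)
    by (rewrite <- gpow_add, Nat.sub_add, E by lia; reflexivity).
  transitivity (gmul G (gmul G (gpow G a (j - i)) (gpow G a i)) (ginv G (gpow G a i))).
  - now rewrite <- gmulA, gmulV_r, gmul1_r.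
  - now rewrite Hshift, gmulV_r.
Qed.
End GroupLaws.

Definition gzpow (G : Group) (g : G) (z : Z) : G :=
  match z with
  | Z0 => gone G
  | Zpos p => gpow G g (Pos.to_nat p)
  | Zneg p => gpow G (ginv G g) (Pos.to_nat p)
  end.

Section MetricSpace.
Context {T : Type} {d : T -> T -> R} (Hm : is_metric d).

Lemma metric_ge0 x y : 0 <= d x y. Proof. apply Hm. Qed.

Lemma metric_refl x : d x x = 0. Proof. now apply Hm. Qed.

Lemma metric_eq0 x y : d x y = 0 -> x = y. Proof. apply Hm. Qed.

Lemma metric_sym x y : d x y = d y x. Proof. apply Hm. Qed.

Lemma metric_tri x y z : d x z <= d x y + d y z. Proof. apply Hm. Qed.

Lemma metric_tri_abs x y z : Rabs (d x z - d y z) <= d x y.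
Proof.
  pose proof (metric_tri x y z); pose proof (metric_tri y x z); rewrite (metric_sym y x) in *.
  unfold Rabs; destruct Rcase_abs; lra.
Qed.

Lemma metric_quad_abs x x' y y' : Rabs (d x x' - d y y') <= d x y + d x' y'.
Proof.
  pose proof (metric_tri x y x'); pose proof (metric_tri y y' x').
  pose proof (metric_tri y x y'); pose proof (metric_tri x x' y').
  rewrite (metric_sym y' x'), (metric_sym y x) in *.
  unfold Rabs; destruct Rcase_abs; lra.
Qed.

Lemma speed_eq_of_bounded_dist (u v : R -> T) su sv a b E :
  (forall s t, d (u s) (u t) = su * Rabs (s - t)) ->
  (forall s t, d (v s) (v t) = sv * Rabs (s - t)) ->
  (forall k : nat, d (u (INR k * a)) (v (INR k * b)) <= E) ->
  su * Rabs a = sv * Rabs b.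
Proof.
  intros Hu Hv HE; apply (eq_of_nat_mul_dist_bounded _ _ (2 * E)); intro k.
  pose proof (metric_quad_abs (u (INR k * a)) (u 0) (v (INR k * b)) (v 0)) as Q.
  rewrite Hu, Hv, !Rminus_0_r, !Rabs_mult, (Rabs_right (INR k)) in Q
    by (apply Rle_ge, pos_INR).
  pose proof (HE k); pose proof (HE 0%nat); rewrite !Rmult_0_l in *.
  replace (INR k * (su * Rabs a) - INR k * (sv * Rabs b))
    with (su * (INR k * Rabs a) - sv * (INR k * Rabs b)) by ring; lra.
Qed.

Lemma compact_bounded K : Defs.compact d K -> forall x0, exists r, forall x, K x -> d x0 x <= r.
Proof.
  intros HK x0; apply NNPP; intro Hunb.
  assert (Hfar : forall n : nat, exists x, K x /\ INR n < d x0 x).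
  { intro n; apply NNPP; intro Hn; apply Hunb; exists (INR n); intros x Kx.
    apply Rnot_lt_le; intro; apply Hn; eauto. }
  apply choice in Hfar as [u Hu].
  destruct (HK u (fun n => proj1 (Hu n))) as [phi [x [Hphi [_ Hcv]]]].
  destruct (Hcv 1 Rlt_0_1) as [N HN].
  destruct (INR_archimed 1 (d x0 x + 1) Rlt_0_1) as [n Hn].
  set (k := Nat.max N n).
  specialize (HN k ltac:(lia)); pose proof (proj2 (Hu (phi k))).
  assert (INR n <= INR (phi k)) by (apply le_INR; pose proof (strict_mono_ge phi Hphi k); lia).
  pose proof (metric_tri x0 x (u (phi k))); rewrite (metric_sym x) in *; lra.
Qed.

Lemma compact_singleton y : Defs.compact d (fun x => x = y).
Proof.
  intros u Hu; exists (fun n => n), y; repeat split; auto.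
  intros eps Heps; exists 0%nat; intros n _; rewrite Hu, metric_refl; lra.
Qed.

Lemma geod_segment_rev c x y :
  geod_segment d c x y -> geod_segment d (fun u => c (1 - u)) y x.
Proof.
  intros [H0 [H1 H]]; repeat split.
  - now rewrite Rminus_0_r.
  - now rewrite Rminus_diag.
  - intros s t Hs Ht; rewrite H, (metric_sym x y) by lra; f_equal.
    rewrite <- Rabs_Ropp; f_equal; ring.
Qed.

Lemma geod_line_segment l a b :
  geod_line d l -> geod_segment d (fun u => l (a + u * (b - a))) (l a) (l b).
Proof.
  intros Hl; repeat split; try (f_equal; ring).
  intros s t _ _; rewrite !Hl, <- Rabs_mult, <- Rabs_Ropp; f_equal; ring.
Qed.

Lemma geod_segment_image f c x y :
  (forall a b, d (f a) (f b) = d a b) -> geod_segment d c x y ->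
  geod_segment d (fun u => f (c u)) (f x) (f y).
Proof.
  intros Hf [H0 [H1 H]]; repeat split; try congruence.
  intros; rewrite !Hf; auto.
Qed.

Lemma geod_line_proj_exists l x : geod_line d l -> exists s0, is_proj d l x s0.
Proof.
  intros Hl; set (h := fun s => d x (l s)).
  assert (Hh : forall s, Rabs s - h 0 <= h s).
  { intro s; pose proof (metric_tri (l 0) x (l s)) as Htri.
    rewrite (metric_sym (l 0) x), Hl, Rminus_0_l, Rabs_Ropp in Htri; unfold h; lra. }
  assert (Hcont : forall s, continuity_pt h s).
  { intros s eps Heps; exists eps; split; auto; intros s' [_ Hs']; simpl in *.
    unfold R_dist, h in *; rewrite metric_sym, (metric_sym x).
    eapply Rle_lt_trans; [apply metric_tri_abs|]; now rewrite Hl. }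
  pose proof (metric_ge0 x (l 0)).
  destruct (continuity_ab_min h (- (2 * h 0)) (2 * h 0)) as [s0 [Hmin _]];
    [unfold h; lra|auto|].
  exists s0; intro s; change (h s0 <= h s).
  destruct (Rle_dec (Rabs s) (2 * h 0)) as [Hs|Hs].
  - apply Hmin; unfold Rabs in Hs; destruct Rcase_abs in Hs; lra.
  - assert (h s0 <= h 0) by (apply Hmin; unfold h; lra); pose proof (Hh s); lra.
Qed.

Lemma asymptotic_both_ends_bounded h l :
  asymptotic d (fun t => h (l t)) l -> asymptotic d (fun t => h (l (- t))) (fun t => l (- t)) ->
  exists C, forall t, d (h (l t)) (l t) <= C.
Proof.
  intros [Cp HCp] [Cn HCn]; exists (Rmax Cp Cn); intro t.
  destruct (Rle_dec 0 t).
  - eapply Rle_trans; [apply HCp; auto|apply Rmax_l].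
  - eapply Rle_trans; [|apply Rmax_r]; rewrite <- (Ropp_involutive t); apply HCn; lra.
Qed.

Lemma axis_translation f l :
  (forall x y, d (f x) (f y) = d x y) -> hyperbolic d f -> is_axis d f l ->
  exists tau, tau <> 0 /\ forall t, f (l t) = l (t + tau).
Proof.
  (* [f] induces an isometry of the line: a translation, or a reflection, which
     would have a fixed point. *)
  intros Hf [x0 [Hx0 Hmin]] [Hl [Hinv _]].
  assert (Hnofix : forall t, f (l t) <> l t).
  { intros t E; specialize (Hmin (l t)); rewrite E, metric_refl in Hmin; lra. }
  assert (Hsq : forall t st t' st', f (l t) = l st -> f (l t') = l st' ->
            (st - st') ^ 2 = (t - t') ^ 2).
  { intros t st t' st' E E'.
    rewrite <- (pow2_abs (st - st')), <- (pow2_abs (t - t')), <- !Hl, <- E, <- E', Hf; reflexivity. }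
  destruct (Hinv 0) as [s0 E0]; destruct (Hinv 1) as [s1 E1].
  assert (He : (s1 - s0) ^ 2 = 1) by (rewrite (Hsq _ _ _ _ E1 E0); ring).
  assert (Haff : forall t st, f (l t) = l st -> st - s0 = t * (s1 - s0)).
  { intros t st Et.
    pose proof (Hsq _ _ _ _ Et E0); pose proof (Hsq _ _ _ _ Et E1).
    assert (Hu : (st - s0) * (s1 - s0) = t) by nra.
    replace (st - s0) with ((st - s0) * (s1 - s0) ^ 2) by (rewrite He; ring).
    rewrite <- Hu; ring. }
  assert (Hpm : (s1 - s0 - 1) * (s1 - s0 + 1) = 0) by lra.
  destruct (Rmult_integral _ _ Hpm) as [Hplus|Hminus].
  - exists s0; split.
    + intros ->; apply (Hnofix 0); now rewrite E0.
    + intro t; destruct (Hinv t) as [st Et]; rewrite Et; f_equal.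
      pose proof (Haff _ _ Et); replace (s1 - s0) with 1 in * by lra; lra.
  - exfalso; destruct (Hinv (s0 / 2)) as [sm Em].
    pose proof (Haff _ _ Em); replace (s1 - s0) with (-1) in * by lra.
    apply (Hnofix (s0 / 2)); rewrite Em; f_equal; lra.
Qed.
End MetricSpace.

Section IsometricAction.
Context {G : Group} {T : Type} {d : T -> T -> R} {act : G -> T -> T}.
Hypothesis Hact : isometric_action d act.
Hypothesis Hm : is_metric d.

Lemma act_one x : act (gone G) x = x. Proof. apply Hact. Qed.

Lemma act_mul g h x : act (gmul G g h) x = act g (act h x). Proof. apply Hact. Qed.

Lemma act_iso g x y : d (act g x) (act g y) = d x y. Proof. apply Hact. Qed.

Lemma act_inv_l g x : act (ginv G g) (act g x) = x.
Proof. now rewrite <- act_mul, gmulV, act_one. Qed.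

Lemma act_inv_r g x : act g (act (ginv G g) x) = x.
Proof. now rewrite <- act_mul, gmulV_r, act_one. Qed.

Lemma act_inj g x y : act g x = act g y -> x = y.
Proof. intro E; now rewrite <- (act_inv_l g x), E, act_inv_l. Qed.

Lemma act_gpow_translate g (l : R -> T) tau :
  (forall t, act g (l t) = l (t + tau)) ->
  forall n t, act (gpow G g n) (l t) = l (t + INR n * tau).
Proof.
  intros Hg n; induction n as [|n IH]; intro t; simpl gpow.
  - rewrite act_one; f_equal; simpl; ring.
  - rewrite act_mul, IH, Hg, S_INR; f_equal; ring.
Qed.

Lemma act_gzpow_translate g (l : R -> T) tau :
  (forall t, act g (l t) = l (t + tau)) ->
  forall z t, act (gzpow G g z) (l t) = l (t + IZR z * tau).
Proof.
  intros Hg [|p|p] t; simpl gzpow.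
  - rewrite act_one; f_equal; simpl; ring.
  - now rewrite (act_gpow_translate g l tau Hg), INR_IPR.
  - assert (Hinv : forall s, act (ginv G g) (l s) = l (s + - tau)).
    { intro s; rewrite <- (act_inv_l g (l (s + - tau))), Hg; f_equal; f_equal; ring. }
    rewrite (act_gpow_translate _ l _ Hinv), INR_IPR, IZR_NEG.
    change (IZR (Z.pos p)) with (IPR p); f_equal; ring.
Qed.

Lemma commensurable_translation alpha beta i j zi zj l tau :
  (i <= j)%nat ->
  gmul G (gzpow G alpha zi) (gpow G beta i) = gmul G (gzpow G alpha zj) (gpow G beta j) ->
  (forall t, act alpha (l t) = l (t + tau)) ->
  forall t, act (gpow G beta (j - i)) (l t) = l (t + IZR (zi - zj) * tau).
Proof.
  intros Hij E Htr t.
  pose proof (f_equal (fun g => act g (act (ginv G (gpow G beta i)) (l t))) E) as Et.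
  cbv beta in Et; rewrite <- (Nat.sub_add i j Hij), gpow_add, !act_mul, act_inv_r,
    (act_gzpow_translate _ _ _ Htr) in Et.
  apply (act_inj (gzpow G alpha zj)); rewrite <- Et, (act_gzpow_translate _ _ _ Htr).
  f_equal; rewrite minus_IZR; ring.
Qed.

Lemma act_gpow_dist_le g n x :
  d (act (gpow G g n) x) x <= INR n * d (act g x) x.
Proof.
  induction n as [|n IH]; simpl gpow.
  - rewrite act_one, metric_refl by auto; simpl; lra.
  - rewrite act_mul, S_INR.
    pose proof (metric_tri Hm (act g (act (gpow G g n) x)) (act g x) x).
    rewrite act_iso in *; lra.
Qed.

Lemma translated_lines_close g l l' tau tau' :
  geod_line d l -> tau <> 0 ->
  (forall t, act g (l t) = l (t + tau)) -> (forall t, act g (l' t) = l' (t + tau')) ->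
  forall s, exists t, d (l s) (l' t) <= Rabs tau + d (l 0) (l' 0).
Proof.
  intros Hl Htau Htr Htr' s; destruct (exists_Z_mult_near s tau Htau) as [z Hz].
  exists (IZR z * tau').
  assert (Hz0 : d (l (IZR z * tau)) (l' (IZR z * tau')) = d (l 0) (l' 0)).
  { rewrite <- (Rplus_0_l (IZR z * tau)), <- (Rplus_0_l (IZR z * tau')).
    rewrite <- (act_gzpow_translate _ _ _ Htr), <- (act_gzpow_translate _ _ _ Htr').
    apply act_iso. }
  pose proof (metric_tri Hm (l s) (l (IZR z * tau)) (l' (IZR z * tau'))).
  rewrite Hz0, Hl in *; lra.
Qed.

Lemma fixed_point_not_infinite_order (Hpd : properly_discontinuous d act) g x :
  act g x = x -> ~ infinite_order g.
Proof.
  intros Hfix.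
  assert (Hpow : forall n, act (gpow G g n) x = x).
  { induction n; simpl; [apply act_one|now rewrite act_mul, IHn]. }
  destruct (Hpd _ (compact_singleton Hm x)) as [L HL].
  destruct (list_value_repeats L (gpow G g)) as [i [j [Hij E]]].
  { intro n; apply HL; exists x; auto. }
  exact (not_infinite_order_of_gpow_eq g i j Hij E).
Qed.
End IsometricAction.

(** * CAT(0) geometry *)

Section CAT0Geometry.
Context {T : Type} {d : T -> T -> R} (Hc : CAT0 d).
Let Hm : is_metric d := proj1 Hc.

Lemma CAT0_segments_dist_le g g' x y x' y' u :
  geod_segment d g x y -> geod_segment d g' x' y' -> 0 <= u <= 1 ->
  d (g u) (g' u) <= (1 - u) * d x x' + u * d y y'.
Proof.
  intros Hg Hg' Hu; pose proof Hc as [_ [Hgeo Hcat]].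
  destruct (Hgeo x y') as [e He].
  assert (A1 : d (g u) (e u) <= u * d y y').
  { assert (d (g u) (e u) ^ 2 <= (u * d y y') ^ 2).
    { eapply Rle_trans; [exact (Hcat x y y' g e Hg He u u Hu Hu)|right; ring]. }
    pose proof (metric_ge0 Hm (g u) (e u)).
    assert (0 <= u * d y y') by (pose proof (metric_ge0 Hm y y'); nra); nra. }
  assert (A2 : d (e u) (g' u) <= (1 - u) * d x x').
  { pose proof (Hcat y' x x' _ _ (geod_segment_rev Hm _ _ _ He) (geod_segment_rev Hm _ _ _ Hg')
                  (1 - u) (1 - u) ltac:(lra) ltac:(lra)) as K.
    cbv beta in K; replace (1 - (1 - u)) with u in K by ring.
    assert (d (e u) (g' u) ^ 2 <= ((1 - u) * d x x') ^ 2).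
    { eapply Rle_trans; [exact K|right; ring]. }
    pose proof (metric_ge0 Hm (e u) (g' u)).
    assert (0 <= (1 - u) * d x x') by (pose proof (metric_ge0 Hm x x'); nra); nra. }
  pose proof (metric_tri Hm (g u) (e u) (g' u)); lra.
Qed.

Lemma CAT0_lines_dist_convex c c' :
  geod_line d c -> geod_line d c' -> convex_on_R (fun t => d (c t) (c' t)).
Proof.
  intros H H' p q lam Hlam.
  pose proof (CAT0_segments_dist_le _ _ _ _ _ _ lam
                (geod_line_segment _ p q H) (geod_line_segment _ p q H') Hlam) as K.
  cbv beta in K; replace ((1 - lam) * p + lam * q) with (p + lam * (q - p)) by ring; exact K.
Qed.

(* Reparametrizing [l] by a shift [sg], the distance [t |-> d (c t) (l (t + sg))]
   is convex and bounded, hence constant. *)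
Lemma CAT0_parallel_lines_dist c l M :
  geod_line d c -> geod_line d l -> (forall t, d (c t) (l t) <= M) ->
  forall u s, d (c u) (l s) = d (c 0) (l (s - u)).
Proof.
  intros Hc' Hl HM u s; set (sg := s - u).
  assert (Hls : geod_line d (fun t => l (t + sg))).
  { intros a b; rewrite Hl; f_equal; ring. }
  assert (Hb : forall t, Rabs (d (c t) (l (t + sg))) <= M + Rabs sg).
  { intro t; rewrite Rabs_right by (apply Rle_ge, metric_ge0, Hm).
    pose proof (metric_tri Hm (c t) (l t) (l (t + sg))); rewrite Hl in *.
    replace (t - (t + sg)) with (- sg) in * by ring; rewrite Rabs_Ropp in *.
    specialize (HM t); lra. }
  pose proof (bounded_convex_const _ _ (CAT0_lines_dist_convex _ _ Hc' Hls) Hb u 0) as K.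
  cbv beta in K; unfold sg in K; now replace (u + (s - u)) with s in K by ring;
    rewrite Rplus_0_l in K.
Qed.

Lemma CAT0_midpoint_displacement f c x :
  (forall a b, d (f a) (f b) = d a b) -> geod_segment d c x (f x) ->
  d (c (1 / 2)) (f (c (1 / 2))) <= d x (f (f x)) / 2.
Proof.
  intros Hf Hs.
  pose proof (CAT0_segments_dist_le _ _ _ _ _ _ (1 / 2) (geod_segment_rev Hm _ _ _ Hs)
                (geod_segment_image f _ _ _ Hf Hs) ltac:(lra)) as K.
  cbv beta in K; replace (1 - 1 / 2) with (1 / 2) in K by field.
  rewrite (metric_refl Hm) in K; lra.
Qed.

Lemma contracting_parallel_line_close l :
  geod_line d l -> contracting d l ->
  exists K, forall c, geod_line d c -> (exists M, forall t, d (c t) (l t) <= M) ->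
  exists s, d (c 0) (l s) <= K.
Proof.
  intros Hl [K [HK Hcon]]; exists K; intros c Hcl [M HM].
  pose proof (CAT0_parallel_lines_dist _ _ _ Hcl Hl HM) as Hpar.
  destruct (geod_line_proj_exists Hm _ (c 0) Hl) as [s0 Hs0].
  exists s0; apply Rnot_lt_le; intro Hfar; set (w := d (c 0) (l s0)) in *.
  assert (Hproj : forall u, is_proj d l (c u) (u + s0)).
  { intros u s; rewrite (Hpar u (u + s0)), (Hpar u s).
    replace (u + s0 - u) with s0 by ring; apply Hs0. }
  (* the points [c (-th)], [c th] lie in the ball of radius [w] about [c 0], which
     misses [l], but their projections are [2 th > K] apart *)
  set (th := (K / 2 + w) / 2).
  assert (Hth : Rabs th = th) by (apply Rabs_right; unfold th; lra).
  assert (Hnear : forall v, Rabs v = th -> d (c 0) (c v) < w).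
  { intros v Hv; rewrite Hcl, Rminus_0_l, Rabs_Ropp, Hv; unfold th; lra. }
  assert (Hth' : Rabs (- th) = th) by now rewrite Rabs_Ropp.
  pose proof (Hcon (c 0) w Hs0 (c (- th)) (c th) (- th + s0) (th + s0)
                (Hnear _ Hth') (Hnear _ Hth) (Hproj _) (Hproj _)) as Hclose.
  rewrite Hl in Hclose; replace (- th + s0 - (th + s0)) with (- (2 * th)) in Hclose by ring.
  rewrite Rabs_Ropp, Rabs_right in Hclose by (unfold th; lra); unfold th in Hclose; lra.
Qed.
End CAT0Geometry.

(** * Semisimplicity of infinite-order elements *)

Section ConvexCocompact.
Context {G : Group} {T : Type} {d : T -> T -> R} {act : G -> T -> T}.
Hypothesis Hc : CAT0 d.
Hypothesis Hact : isometric_action d act.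
Let Hm : is_metric d := proj1 Hc.

Section InvariantConvex.
Variable C : T -> Prop.
Hypothesis HCconv : convex_set d C.
Hypothesis HCinv : forall g x, C x -> C (act g x).

Lemma convex_invariant_displacement_halving g j x : C x ->
  exists y, C y /\ d y (act (gpow G g j) y) <= d x (act (gpow G g (j + j)) x) / 2.
Proof.
  intros Cx; set (f := act (gpow G g j)).
  destruct (proj1 (proj2 Hc) x (f x)) as [c Hcs].
  exists (c (1 / 2)); split.
  - apply (HCconv x (f x) c Cx (HCinv _ _ Cx) Hcs); lra.
  - rewrite gpow_add, (act_mul Hact).
    exact (CAT0_midpoint_displacement Hc f c x (act_iso Hact _) Hcs).
Qed.

Lemma convex_invariant_displacement_pow2 g k x : C x ->
  exists y, C y /\ d y (act g y) * 2 ^ k <= d x (act (gpow G g (2 ^ k)) x).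
Proof.
  revert x; induction k as [|k IH]; intros x Cx.
  - exists x; split; auto; simpl gpow; rewrite (act_mul Hact), (act_one Hact); lra.
  - destruct (convex_invariant_displacement_halving g (2 ^ k) x Cx) as [x' [Cx' Hx']].
    destruct (IH x' Cx') as [y [Cy Hy]]; exists y; split; auto.
    replace (2 ^ S k)%nat with (2 ^ k + 2 ^ k)%nat by (simpl; lia).
    simpl pow; lra.
Qed.

(* [d x0 (g^(2^k) x0)] grows at most like [2^k d y (g y)], while by repeated halving
   it dominates [2^k] times the displacement of some point of [C]. *)
Lemma convex_invariant_displacement_approx g x0 : C x0 ->
  forall y eps, 0 < eps -> exists y', C y' /\ d y' (act g y') <= d y (act g y) + eps.
Proof.
  intros Cx0 y eps Heps.
  assert (Hn : forall n, d x0 (act (gpow G g n) x0) <= 2 * d x0 y + INR n * d y (act g y)).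
  { intro n.
    pose proof (metric_tri Hm x0 y (act (gpow G g n) x0)).
    pose proof (metric_tri Hm y (act (gpow G g n) y) (act (gpow G g n) x0)).
    pose proof (act_gpow_dist_le Hact Hm g n y).
    rewrite (act_iso Hact), (metric_sym Hm y x0) in *.
    rewrite (metric_sym Hm y (act g y)), (metric_sym Hm y (act _ y)) in *; lra. }
  destruct (INR_archimed eps (2 * d x0 y) Heps) as [k Hk].
  destruct (convex_invariant_displacement_pow2 g k x0 Cx0) as [y' [Cy' Hy']].
  exists y'; split; auto.
  specialize (Hn (2 ^ k)%nat); rewrite pow_INR in Hn; simpl INR in Hn.
  replace (1 + 1) with 2 in Hn by ring.
  pose proof (INR_le_pow2 k); pose proof (pow_lt 2 k ltac:(lra)).
  assert (2 ^ k * (d y' (act g y') - d y (act g y) - eps) <= 2 ^ k * 0) by nra.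
  apply Rmult_le_reg_l in H1; lra.
Qed.
End InvariantConvex.

Lemma conjugate_displacement g h x :
  d x (act (gmul G (ginv G h) (gmul G g h)) x) = d (act h x) (act g (act h x)).
Proof. now rewrite !(act_mul Hact), <- (act_iso Hact h), (act_inv_r Hact). Qed.

Lemma displacement_limit_le g (u : nat -> T) x m :
  converges d u x ->
  (forall N, exists n, (N <= n)%nat /\ d (u n) (act g (u n)) <= m + / (INR n + 1)) ->
  d x (act g x) <= m.
Proof.
  intros Hcv Hu; apply Rle_plus_epsilon; intros eps Heps.
  destruct (Hcv (eps / 3)) as [N1 HN1]; [lra|].
  destruct (INR_archimed (eps / 3) 1) as [N2 HN2]; [lra|].
  destruct (Hu (Nat.max N1 N2)) as [n [Hn Hdn]].
  specialize (HN1 n ltac:(lia)).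
  assert (Hinv : / (INR n + 1) < eps / 3).
  { assert (INR N2 <= INR n) by (apply le_INR; lia).
    apply (Rmult_lt_reg_l (INR n + 1)); [pose proof (pos_INR n); lra|].
    rewrite Rinv_r by (pose proof (pos_INR n); lra); nra. }
  pose proof (metric_tri Hm x (u n) (act g x)).
  pose proof (metric_tri Hm (u n) (act g (u n)) (act g x)).
  rewrite (act_iso Hact), (metric_sym Hm x (u n)) in *; lra.
Qed.

Lemma cocompact_displacement_min_attained (Hp : proper_space d)
  (Hpd : properly_discontinuous d act) (C K : T -> Prop) (HK : Defs.compact d K)
  (Hcov : forall x, C x -> exists h y, K y /\ x = act h y) g m :
  (forall eps, 0 < eps -> exists y, C y /\ d y (act g y) <= m + eps) ->
  exists x, d x (act g x) <= m.
Proof.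
  intros Happ.
  assert (Hseq : forall n : nat, exists y, C y /\ d y (act g y) <= m + / (INR n + 1))
    by (intro n; apply Happ, RinvN_pos).
  apply choice in Hseq as [ys Hys].
  assert (Hgk : forall n, exists p : G * T, K (snd p) /\ ys n = act (fst p) (snd p)).
  { intro n; destruct (Hcov (ys n) (proj1 (Hys n))) as [h [y [Ky E]]]; now exists (h, y). }
  apply choice in Hgk as [gk Hgk].
  set (ks n := snd (gk n)); set (hs n := gmul G (ginv G (fst (gk n))) (gmul G g (fst (gk n)))).
  (* Translating the almost minimal points [ys n] back into [K] replaces [g] by
     conjugates [hs n], of which proper discontinuity leaves finitely many. *)
  assert (Hdisp : forall n, d (ks n) (act (hs n) (ks n)) <= m + / (INR n + 1)).
  { intro n; unfold hs, ks; rewrite conjugate_displacement, <- (proj2 (Hgk n)); apply Hys. }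
  destruct (compact_bounded Hm K HK (ks 0%nat)) as [r Hr].
  destruct (Hpd _ (Hp (ks 0%nat) (r + m + 1))) as [L HL].
  assert (Hin : forall n, In (hs n) L).
  { intro n; apply HL; exists (ks n).
    pose proof (Hr (ks n) (proj1 (Hgk n))); pose proof (Hdisp n).
    pose proof (metric_ge0 Hm (ks n) (act (hs n) (ks n))).
    assert (/ (INR n + 1) <= 1)
      by (rewrite <- Rinv_1; apply Rinv_le_contravar; pose proof (pos_INR n); lra).
    pose proof (metric_tri Hm (ks 0%nat) (ks n) (act (hs n) (ks n))); split; lra. }
  destruct (HK ks (fun n => proj1 (Hgk n))) as [phi [k [Hphi [_ Hcv]]]].
  destruct (list_value_infinitely_often L (fun n => hs (phi n)) 0 (fun n _ => Hin (phi n)))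
    as [h Hh].
  destruct (Hh 0%nat) as [n0 [_ Hn0]].
  exists (act (fst (gk (phi n0))) k).
  rewrite <- conjugate_displacement; fold (hs (phi n0)); rewrite Hn0.
  apply (displacement_limit_le h (fun n => ks (phi n)) k m Hcv).
  intro N; destruct (Hh N) as [n [HNn Hhn]]; exists n; split; auto.
  cbv beta in Hhn |- *; rewrite <- Hhn.
  assert (/ (INR (phi n) + 1) <= / (INR n + 1)).
  { apply Rinv_le_contravar; [pose proof (pos_INR n); lra|].
    apply Rplus_le_compat_r, le_INR, (strict_mono_ge phi Hphi). }
  pose proof (Hdisp (phi n)); lra.
Qed.

Theorem convex_cocompact_infinite_order_hyperbolic (Hp : proper_space d) :
  convex_cocompact d act -> forall g, infinite_order g -> hyperbolic d (act g).
Proof.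
  intros [_ [Hpd [C [[x0 Cx0] [_ [HCconv [HCinv [K [HK [_ Hcov]]]]]]]]]] g Hg.
  destruct (inf_of_nonneg_exists (fun x => d x (act g x)) x0 (fun x => metric_ge0 Hm _ _))
    as [m [Hlow Happ]].
  destruct (cocompact_displacement_min_attained Hp Hpd C K HK Hcov g m) as [x Hx].
  { intros eps Heps; destruct (Happ (eps / 2)) as [y Hy]; [lra|].
    destruct (convex_invariant_displacement_approx C HCconv HCinv g x0 Cx0 y (eps / 2))
      as [y' [Cy' Hy']]; [lra|].
    exists y'; split; auto; lra. }
  exists x; split.
  - destruct (Rle_lt_dec (d x (act g x)) 0); auto; exfalso.
    apply (fixed_point_not_infinite_order Hact Hm Hpd g x); auto.
    symmetry; apply (metric_eq0 Hm); pose proof (metric_ge0 Hm x (act g x)); lra.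
  - intro y; specialize (Hlow y); lra.
Qed.
End ConvexCocompact.

(** * Rank one isometries *)

Section RankOne.
Context {G : Group} {T : Type} {d : T -> T -> R} {act : G -> T -> T}.
Hypothesis Hc : CAT0 d.
Hypothesis Hact : isometric_action d act.
Let Hm : is_metric d := proj1 Hc.

(* [beta] moves the axis [l1] of [alpha] a bounded amount, and every axis of
   [alpha] lies at bounded distance from [l1]. *)
Lemma fixes_axis_endpoints_bounded_displacement alpha beta l :
  hyperbolic d (act alpha) -> is_axis d (act alpha) l ->
  fixes_axis_endpoints d (act alpha) (act beta) ->
  exists M, forall s, d (act beta (l s)) (l s) <= M.
Proof.
  intros Hhyp Hax [l1 [Hax1 [Hasp Hasn]]].
  destruct (asymptotic_both_ends_bounded _ _ Hasp Hasn) as [Cb HCb].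
  destruct (axis_translation Hm _ _ (act_iso Hact alpha) Hhyp Hax) as [t0 [Ht0 Tr0]].
  destruct (axis_translation Hm _ _ (act_iso Hact alpha) Hhyp Hax1) as [t1 [_ Tr1]].
  set (M := Rabs t0 + d (l 0) (l1 0)).
  exists (2 * M + Cb); intro s.
  destruct (translated_lines_close Hact Hm _ _ _ _ _ (proj1 Hax) Ht0 Tr0 Tr1 s) as [t Ht].
  pose proof (metric_tri Hm (act beta (l s)) (act beta (l1 t)) (l s)).
  pose proof (metric_tri Hm (act beta (l1 t)) (l1 t) (l s)).
  pose proof (HCb t); rewrite (act_iso Hact), (metric_sym Hm (l1 t)) in *; fold M in Ht; lra.
Qed.

(* Each [beta^n] maps the contracting axis [l0] to a parallel line, which passes
   within a uniform distance of [l0]; correcting by a power of [alpha] brings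
   [beta^n (l0 0)] back near [l0 0], and proper discontinuity leaves only finitely
   many such group elements. *)
Lemma rank_one_commensurable (Hp : proper_space d) (Hpd : properly_discontinuous d act)
  alpha beta :
  rank_one d (act alpha) -> fixes_axis_endpoints d (act alpha) (act beta) ->
  exists i j zi zj, (i < j)%nat /\
    gmul G (gzpow G alpha zi) (gpow G beta i) = gmul G (gzpow G alpha zj) (gpow G beta j).
Proof.
  intros [Hhyp [l0 [Hax0 Hcon0]]] Hfix; pose proof (proj1 Hax0) as Hl0.
  destruct (axis_translation Hm _ _ (act_iso Hact alpha) Hhyp Hax0) as [t0 [Ht0 Tr0]].
  destruct (fixes_axis_endpoints_bounded_displacement _ _ _ Hhyp Hax0 Hfix) as [Mb HMb].
  destruct (contracting_parallel_line_close Hc _ Hl0 Hcon0) as [K HK].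
  assert (Hnear : forall n, exists z : Z,
    d (l0 0) (act (gmul G (gzpow G alpha z) (gpow G beta n)) (l0 0)) <= Rabs t0 + K).
  { intro n.
    destruct (HK (fun t => act (gpow G beta n) (l0 t))) as [s Hs].
    - intros u v; rewrite (act_iso Hact); apply Hl0.
    - exists (INR n * Mb); intro t; eapply Rle_trans; [apply (act_gpow_dist_le Hact Hm)|].
      apply Rmult_le_compat_l; [apply pos_INR|apply HMb].
    - destruct (exists_Z_mult_near s t0 Ht0) as [z Hz]; exists (- z)%Z.
      rewrite (act_mul Hact).
      pose proof (metric_tri Hm (l0 0) (act (gzpow G alpha (- z)) (l0 s))
                    (act (gzpow G alpha (- z)) (act (gpow G beta n) (l0 0)))).
      rewrite (act_iso Hact), (act_gzpow_translate Hact _ _ _ Tr0), Hl0, opp_IZR in *.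
      rewrite (metric_sym Hm (l0 s)) in *.
      replace (0 - (s + - IZR z * t0)) with (- (s - IZR z * t0)) in * by ring.
      rewrite Rabs_Ropp in *; lra. }
  apply choice in Hnear as [zs Hzs].
  destruct (Hpd _ (Hp (l0 0) (Rabs t0 + K))) as [L HL].
  destruct (list_value_repeats L (fun n => gmul G (gzpow G alpha (zs n)) (gpow G beta n)))
    as [i [j [Hij E]]].
  { intro n; apply HL; exists (l0 0); split; [|apply Hzs].
    rewrite (metric_refl Hm); pose proof (Rabs_pos t0); specialize (Hzs n).
    pose proof (metric_ge0 Hm (l0 0) (act (gmul G (gzpow G alpha (zs n)) (gpow G beta n)) (l0 0)));
      lra. }
  now exists i, j, (zs i), (zs j).
Qed.
End RankOne.

(** * Slopes in the product *)

Section Product.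
Context {X1 X2 : Type} {d1 : X1 -> X1 -> R} {d2 : X2 -> X2 -> R}.
Hypotheses (Hm1 : is_metric d1) (Hm2 : is_metric d2).

Lemma dprod_sq p q :
  dprod d1 d2 p q ^ 2 = d1 (fst p) (fst q) ^ 2 + d2 (snd p) (snd q) ^ 2.
Proof. unfold dprod; rewrite pow2_sqrt; nra. Qed.

Lemma dprod_ge_fst p q : d1 (fst p) (fst q) <= dprod d1 d2 p q.
Proof.
  pose proof (dprod_sq p q); pose proof (sqrt_pos (d1 (fst p) (fst q) ^ 2 + d2 (snd p) (snd q) ^ 2)).
  pose proof (metric_ge0 Hm1 (fst p) (fst q)); unfold dprod in *; nra.
Qed.

Lemma dprod_ge_snd p q : d2 (snd p) (snd q) <= dprod d1 d2 p q.
Proof.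
  pose proof (dprod_sq p q); pose proof (sqrt_pos (d1 (fst p) (fst q) ^ 2 + d2 (snd p) (snd q) ^ 2)).
  pose proof (metric_ge0 Hm2 (snd p) (snd q)); unfold dprod in *; nra.
Qed.

Lemma dprod_metric : is_metric (dprod d1 d2).
Proof.
  repeat split.
  - intros; apply sqrt_pos.
  - intros E; pose proof (dprod_sq x y) as Hsq; rewrite E in Hsq.
    pose proof (metric_ge0 Hm1 (fst x) (fst y)); pose proof (metric_ge0 Hm2 (snd x) (snd y)).
    destruct x, y; f_equal; [apply (metric_eq0 Hm1)|apply (metric_eq0 Hm2)]; simpl in *; nra.
  - intros <-; unfold dprod; rewrite (metric_refl Hm1), (metric_refl Hm2).
    replace (0 ^ 2 + 0 ^ 2) with 0 by ring; apply sqrt_0.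
  - intros p q; unfold dprod; now rewrite (metric_sym Hm1 (fst p)), (metric_sym Hm2 (snd p)).
  - intros x y z; unfold dprod; apply sqrt_sum_sq_triangle; try apply metric_ge0; auto;
      apply metric_tri; auto.
Qed.

Lemma geod_line_dprod_speeds l : geod_line (dprod d1 d2) l ->
  (forall s t, d1 (fst (l s)) (fst (l t)) = d1 (fst (l 0)) (fst (l 1)) * Rabs (s - t)) /\
  (forall s t, d2 (snd (l s)) (snd (l t)) = d2 (snd (l 0)) (snd (l 1)) * Rabs (s - t)) /\
  d1 (fst (l 0)) (fst (l 1)) ^ 2 + d2 (snd (l 0)) (snd (l 1)) ^ 2 = 1.
Proof.
  intros Hl.
  assert (Hpyth : forall a b,
    d1 (fst (l a)) (fst (l b)) ^ 2 + d2 (snd (l a)) (snd (l b)) ^ 2 = (a - b) ^ 2)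
    by (intros a b; now rewrite <- dprod_sq, Hl, pow2_abs).
  repeat split.
  - apply (constant_speed_of_pythagorean (fun a b => d1 (fst (l a)) (fst (l b)))
             (fun a b => d2 (snd (l a)) (snd (l b))));
      intros; try apply metric_ge0; try apply metric_tri; try apply metric_sym; auto.
  - apply (constant_speed_of_pythagorean (fun a b => d2 (snd (l a)) (snd (l b)))
             (fun a b => d1 (fst (l a)) (fst (l b))));
      intros; try apply metric_ge0; try apply metric_tri; try apply metric_sym; auto.
    rewrite <- (Hpyth a b); ring.
  - rewrite Hpyth; ring.
Qed.

Lemma slp_eq_of_speeds l l' :
  geod_line (dprod d1 d2) l -> geod_line (dprod d1 d2) l' ->
  d1 (fst (l 0)) (fst (l 1)) = d1 (fst (l' 0)) (fst (l' 1)) ->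
  d2 (snd (l 0)) (snd (l 1)) = d2 (snd (l' 0)) (snd (l' 1)) ->
  slp d1 d2 l = slp d1 d2 l'.
Proof.
  intros Hl Hl' E1 E2.
  assert (Hconst : forall m, geod_line (dprod d1 d2) m ->
    (forall t, 0 <= t -> snd (m t) = snd (m 0)) <-> d2 (snd (m 0)) (snd (m 1)) = 0).
  { intros m Hm; destruct (geod_line_dprod_speeds m Hm) as [_ [S2 _]]; split.
    - intros H; rewrite (H 1) by lra; apply (metric_refl Hm2).
    - intros Z t _; apply (metric_eq0 Hm2); rewrite S2, Z; ring. }
  unfold slp.
  destruct (excluded_middle_informative (forall t, 0 <= t -> snd (l t) = snd (l 0))) as [h|h];
  destruct (excluded_middle_informative (forall t, 0 <= t -> snd (l' t) = snd (l' 0))) as [h'|h'];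
    rewrite ?(Hconst l Hl), ?(Hconst l' Hl') in *; try congruence.
Qed.

Lemma hyperbolic_dprod f1 f2 : hyperbolic d1 f1 -> hyperbolic d2 f2 ->
  hyperbolic (dprod d1 d2) (fun p => (f1 (fst p), f2 (snd p))).
Proof.
  intros [x1 [P1 M1]] [x2 [P2 M2]]; exists (x1, x2); unfold dprod; simpl; split.
  - apply sqrt_lt_R0; nra.
  - intros [y1 y2]; apply sqrt_le_1_alt; simpl.
    specialize (M1 y1); specialize (M2 y2).
    pose proof (pow_incr _ _ 2 (conj (Rlt_le _ _ P1) M1)).
    pose proof (pow_incr _ _ 2 (conj (Rlt_le _ _ P2) M2)); lra.
Qed.

(* Two lines moved along by a common isometry stay at bounded distance along
   the arithmetic progressions [k a] and [k b]; comparing linear growth of the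
   components gives [|a| = |b|] and equal component speeds. *)
Lemma slp_eq_of_common_translation l l' a b E :
  geod_line (dprod d1 d2) l -> geod_line (dprod d1 d2) l' -> b <> 0 ->
  (forall k : nat, dprod d1 d2 (l (INR k * a)) (l' (INR k * b)) <= E) ->
  slp d1 d2 l = slp d1 d2 l'.
Proof.
  intros Hl Hl' Hb HE.
  destruct (geod_line_dprod_speeds l Hl) as [S1 [S2 S]].
  destruct (geod_line_dprod_speeds l' Hl') as [S1' [S2' S']].
  pose proof (speed_eq_of_bounded_dist Hm1 (fun t => fst (l t)) (fun t => fst (l' t)) _ _ a b E
                S1 S1' (fun k => Rle_trans _ _ _ (dprod_ge_fst _ _) (HE k))) as C1.
  pose proof (speed_eq_of_bounded_dist Hm2 (fun t => snd (l t)) (fun t => snd (l' t)) _ _ a b E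
                S2 S2' (fun k => Rle_trans _ _ _ (dprod_ge_snd _ _) (HE k))) as C2.
  set (v1 := d1 (fst (l 0)) (fst (l 1))) in *; set (v2 := d2 (snd (l 0)) (snd (l 1))) in *.
  set (w1 := d1 (fst (l' 0)) (fst (l' 1))) in *; set (w2 := d2 (snd (l' 0)) (snd (l' 1))) in *.
  assert (Hab : Rabs a = Rabs b).
  { assert (Rabs a ^ 2 = Rabs b ^ 2).
    { transitivity (Rabs a ^ 2 * (v1 ^ 2 + v2 ^ 2)); [rewrite S; ring|].
      transitivity ((v1 * Rabs a) ^ 2 + (v2 * Rabs a) ^ 2); [ring|].
      rewrite C1, C2; transitivity (Rabs b ^ 2 * (w1 ^ 2 + w2 ^ 2)); [ring|].
      rewrite S'; ring. }
    pose proof (Rabs_pos a); pose proof (Rabs_pos b); apply Rle_antisym; nra. }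
  pose proof (Rabs_pos_lt b Hb).
  apply slp_eq_of_speeds; auto; apply (Rmult_eq_reg_r (Rabs b)); try lra.
  - now rewrite <- Hab at 1.
  - now rewrite <- Hab at 1.
Qed.

Lemma slp_eq_of_commensurable_axes {G : Group} {act : G -> X1 * X2 -> X1 * X2}
  (Hact : isometric_action (dprod d1 d2) act) alpha beta i j zi zj la lb tA tB :
  (i < j)%nat ->
  gmul G (gzpow G alpha zi) (gpow G beta i) = gmul G (gzpow G alpha zj) (gpow G beta j) ->
  geod_line (dprod d1 d2) la -> geod_line (dprod d1 d2) lb -> tB <> 0 ->
  (forall t, act alpha (la t) = la (t + tA)) -> (forall t, act beta (lb t) = lb (t + tB)) ->
  slp d1 d2 la = slp d1 d2 lb.
Proof.
  intros Hij E Hla Hlb HtB TrA TrB; set (N := (j - i)%nat).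
  pose proof (commensurable_translation Hact alpha beta i j zi zj la tA ltac:(lia) E TrA) as TrNA.
  pose proof (act_gpow_translate Hact beta lb tB TrB N) as TrNB.
  apply (slp_eq_of_common_translation la lb (IZR (zi - zj) * tA) (INR N * tB)
           (dprod d1 d2 (la 0) (lb 0)) Hla Hlb).
  - apply Rmult_integral_contrapositive_currified; auto; apply not_0_INR; unfold N; lia.
  - intro k; rewrite <- (Rplus_0_l (INR k * (IZR (zi - zj) * tA))),
      <- (Rplus_0_l (INR k * (INR N * tB))).
    rewrite <- (act_gpow_translate Hact _ la _ TrNA), <- (act_gpow_translate Hact _ lb _ TrNB).
    rewrite (act_iso Hact); lra.
Qed.
End Product.

Theorem lemma3p4 (G : Group) (X1 X2 : Type)
  (d1 : X1 -> X1 -> R) (d2 : X2 -> X2 -> R)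
  (rho1 : G -> X1 -> X1) (rho2 : G -> X2 -> X2) (alpha beta : G) :
  CAT0 d1 -> proper_space d1 -> CAT0 d2 -> proper_space d2 ->
  infinite_group G ->
  convex_cocompact d1 rho1 -> convex_cocompact d2 rho2 ->
  convex_cocompact (dprod d1 d2) (diag_act rho1 rho2) ->
  rank_one d1 (rho1 alpha) -> rank_one d2 (rho2 alpha) ->
  infinite_order beta ->
  fixes_axis_endpoints d1 (rho1 alpha) (rho1 beta) ->
  fixes_axis_endpoints d2 (rho2 alpha) (rho2 beta) ->
  hyperbolic (dprod d1 d2) (diag_act rho1 rho2 alpha) /\
  hyperbolic (dprod d1 d2) (diag_act rho1 rho2 beta) /\
  forall la lb : R -> X1 * X2,
    is_axis (dprod d1 d2) (diag_act rho1 rho2 alpha) la ->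
    is_axis (dprod d1 d2) (diag_act rho1 rho2 beta) lb ->
    slp d1 d2 lb = slp d1 d2 la.
Proof.
  intros Hc1 Hp1 Hc2 Hp2 _ Hcc1 Hcc2 Hccp Hr1 Hr2 Hinf Hfix1 _.
  pose proof (dprod_metric (proj1 Hc1) (proj1 Hc2)) as HmP.
  pose proof (proj1 Hccp) as HaP.
  assert (HhypA : hyperbolic (dprod d1 d2) (diag_act rho1 rho2 alpha))
    by exact (hyperbolic_dprod _ _ (proj1 Hr1) (proj1 Hr2)).
  assert (HhypB : hyperbolic (dprod d1 d2) (diag_act rho1 rho2 beta))
    by exact (hyperbolic_dprod _ _
      (convex_cocompact_infinite_order_hyperbolic Hc1 (proj1 Hcc1) Hp1 Hcc1 beta Hinf)
      (convex_cocompact_infinite_order_hyperbolic Hc2 (proj1 Hcc2) Hp2 Hcc2 beta Hinf)).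
  split; [exact HhypA|split; [exact HhypB|]].
  intros la lb Hla Hlb.
  destruct (axis_translation HmP _ _ (act_iso HaP alpha) HhypA Hla) as [tA [_ TrA]].
  destruct (axis_translation HmP _ _ (act_iso HaP beta) HhypB Hlb) as [tB [HtB TrB]].
  destruct (rank_one_commensurable Hc1 (proj1 Hcc1) Hp1 (proj1 (proj2 Hcc1)) alpha beta Hr1 Hfix1)
    as [i [j [zi [zj [Hij E]]]]].
  symmetry; exact (slp_eq_of_commensurable_axes (proj1 Hc1) (proj1 Hc2) HaP alpha beta
                     i j zi zj la lb tA tB Hij E (proj1 Hla) (proj1 Hlb) HtB TrA TrB).
Qed.
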